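(* Let $F=\breve F(\alpha_1,\dots,\alpha_t)$ be a fence, let $i\in[t]$ with $\alpha_i\ge 2$, let $x\in\breve S_i$, let $v$ be the valley of $S_i$ (if it exists) and $p$ the peak of $S_i$ (if it exists), and put $y=s_{(i,1)}$, $z=s_{(i,\beta_i)}$. Then, as functions on $\mathcal J(F)$, \[ \alpha_i\chi_x+\chi_v+\chi_p=1-T_v-\sum_{y\trianglelefteq u\trianglelefteq x}\#[y,u]\,T_u+\sum_{x\vartriangleleft u\trianglelefteq z}\#[u,z]\,T_u , \] where $[a,b]=\{w\in F: a\trianglelefteq w\trianglelefteq b\}$ is an interval of $F$.
   Context: Fences: let $\alpha=(\alpha_1,\dots,\alpha_t)$ be positive integers with $t\ge2$ and $\alpha_1,\alpha_t\ge2$. Put $a_0=0$, $a_i=\alpha_1+\dots+\alpha_i$, $n=a_t-1$. The fence $\breve F(\alpha)$ is the poset (order $\trianglelefteq$) on $\{x_1,\dots,x_n\}$ whose cover relations are: for $1\le j\le n-1$ with $a_{i-1}\le j<a_i$, $x_j\lessdot x_{j+1}$ if $i$ is odd and $x_j\gtrdot x_{j+1}$ if $i$ is even. Segments: $S_1=\{x_j:1\le j\le a_1\}$, $S_i=\{x_j:a_{i-1}\le j\le a_i\}$ for $2\le i\le t-1$, $S_t=\{x_j:a_{t-1}\le j\le n\}$ (each a chain). The shared elements are $s_i=x_{a_i}$, $i\in[t-1]$; $s_i$ is a peak (covers two elements) for $i$ odd and a valley (is covered by two elements) for $i$ even. The peak (valley) of $S_i$ is the shared element of $S_i$ that is a peak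 (valley), if any. $\breve S_i$ is the set of unshared elements of $S_i$; $\beta_i=\#\breve S_i=\alpha_i-1$; $s_{(i,j)}$ is the $j$-th smallest element of $\breve S_i$ in the order of $F$. $\mathcal J(F)$ is the set of order ideals. For $q\in F$ and $I\in\mathcal J(F)$: $\chi_q(I)=1$ if $q\in\max(I)$ and $0$ otherwise; $T_q(I)=1$ if $q\notin I$ and $I\cup\{q\}$ is an ideal (i.e. $q\in\min(F\setminus I)$), $T_q(I)=-1$ if $q\in\max(I)$, and $T_q(I)=0$ otherwise. Convention: any statistic indexed by a nonexistent element (e.g. the valley of a segment with no valley) is identically zero. *)

From mathcomp Require Import all_boot all_order all_algebra.
Unset Implicit Arguments. Unset Printing Implicit Defensive.
Import GRing.Theory Num.Theory.

(* Fence  F(alpha), alpha = (alpha_1,...,alpha_t) given as a seq nat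
   (alpha_i = nth 0 alpha (i-1)).  The element x_j (1 <= j <= n) is the
   ordinal u : 'I_n with u.+1 = j. *)

Definition apos (alpha : seq nat) (i : nat) : nat := sumn (take i alpha).

Definition fence_n (alpha : seq nat) : nat := apos alpha (size alpha) - 1.

Notation fenceT alpha := ('I_(fence_n alpha)).

(* Direction at position j (1-based): the cover between x_j and x_{j+1}
   goes up iff the (1-based) segment index i with a_{i-1} <= j < a_i is odd;
   here k = i - 1 is 0-based, so i odd <-> k even. *)
Definition dir_up (alpha : seq nat) (j : nat) : bool :=
  [exists k : 'I_(size alpha), (apos alpha k <= j < apos alpha k.+1) && ~~ odd k].

(* covers alpha u w  <->  u is covered by w  (u ⋖ w) *)
Definition covers (alpha : seq nat) (u w : fenceT alpha) : bool :=
  ((w.+1 == u.+2) && dir_up alpha u.+1) ||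
  ((u.+1 == w.+2) && ~~ dir_up alpha w.+1).

Definition fle (alpha : seq nat) (u w : fenceT alpha) : bool :=
  connect (covers alpha) u w.
Definition flt (alpha : seq nat) (u w : fenceT alpha) : bool :=
  (u != w) && fle alpha u w.

Definition finterval (alpha : seq nat) (a b : fenceT alpha) : {set fenceT alpha} :=
  [set w | fle alpha a w && fle alpha w b].

Definition is_ideal (alpha : seq nat) (I : {set fenceT alpha}) : bool :=
  [forall u, forall w, fle alpha u w ==> (w \in I) ==> (u \in I)].

Definition is_max_in (alpha : seq nat) (q : fenceT alpha) (I : {set fenceT alpha}) : bool :=
  (q \in I) && [forall w, flt alpha q w ==> (w \notin I)].

Definition chi (alpha : seq nat) (q : fenceT alpha) (I : {set fenceT alpha}) : int :=
  (is_max_in alpha q I : nat)%:Z.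

Definition Tstat (alpha : seq nat) (q : fenceT alpha) (I : {set fenceT alpha}) : int :=
  if (q \notin I) && is_ideal alpha (q |: I) then 1%R
  else if is_max_in alpha q I then (-1)%R else 0%R.

Definition chiO (alpha : seq nat) (o : option (fenceT alpha)) I : int :=
  if o is Some q then chi alpha q I else 0%R.
Definition TO (alpha : seq nat) (o : option (fenceT alpha)) I : int :=
  if o is Some q then Tstat alpha q I else 0%R.

(* segments S_i (1-based i in [t]):  S_i = { x_j : a_{i-1} <= j <= a_i } ∩ {x_1..x_n};
   for i = 1 the lower bound a_0 = 0 is vacuous and for i = t the upper bound
   a_t = n+1 is vacuous, giving exactly the paper's S_1 and S_t. *)
Definition seg (alpha : seq nat) (i : nat) : {set fenceT alpha} :=
  [set u : fenceT alpha | apos alpha i.-1 <= u.+1 <= apos alpha i].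

Definition shared (alpha : seq nat) : {set fenceT alpha} :=
  [set u : fenceT alpha | [exists k : 'I_(size alpha), (0 < (k : nat)) && (u.+1 == apos alpha k)]].

Definition unshared (alpha : seq nat) (i : nat) : {set fenceT alpha} :=
  seg alpha i :\: shared alpha.

Definition beta (alpha : seq nat) (i : nat) : nat := (nth 0 alpha i.-1).-1.

Definition is_sij (alpha : seq nat) (i j : nat) (u : fenceT alpha) : bool :=
  (u \in unshared alpha i) &&
  (#|[set w in unshared alpha i | flt alpha w u]| == j.-1).

Definition is_peak (alpha : seq nat) (u : fenceT alpha) : bool :=
  #|[set w | covers alpha w u]| == 2.
Definition is_valley (alpha : seq nat) (u : fenceT alpha) : bool :=
  #|[set w | covers alpha u w]| == 2.

Definition peak_of (alpha : seq nat) (i : nat) : option (fenceT alpha) :=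
  [pick u in seg alpha i :&: shared alpha | is_peak alpha u].
Definition valley_of (alpha : seq nat) (i : nat) : option (fenceT alpha) :=
  [pick u in seg alpha i :&: shared alpha | is_valley alpha u].

From mathcomp Require Import all_boot all_order all_algebra.
From mathcomp Require Import zify.
Import GRing.Theory Num.Theory.
Set Implicit Arguments. Unset Strict Implicit.

(* The beta = alpha_i - 1 unshared elements of S_i form a chain
   u_1 <. u_2 <. ... <. u_beta (<. is the cover relation) with y = u_1 and
   z = u_beta; the interval [u_1, u_beta] is exactly this chain, and the only
   covers leaving it are v <. u_1 and u_beta <. p, where the valley v is minimal
   and the peak p is maximal in F.  The identity holds for every finite poset
   with such a chain.  An ideal I meets the chain in u_1, ..., u_k, so
   T_{u_j} = [j = k+1] - [j = k], except that the first term vanishes when v is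
   not in I (then k = 0) and the second when p is in I (then k = beta); moreover
   chi_v + T_v = [v not in I] and chi_p = [p in I].  As #[u_1, u_j] = j and
   #[u_j, u_beta] = beta + 1 - j, for x = u_m the two sums together read
   - sum_j c_j T_{u_j} with c_j = j for j <= m and c_j = j - beta - 1 for j > m,
   and the jump c_{k+1} - c_k = 1 - (beta + 1) [k = m] of these weights
   produces alpha_i chi_x. *)

Lemma sum_nat_indicator (c : nat -> int) (P : bool) (a b p : nat) :
  (\sum_(a <= j < b) c j * ((P && (j == p)) : nat)%:Z
   = if P && (a <= p < b)%N then c p else 0)%R.
Proof.
case: P => /=; last by rewrite big1 // => j _; rewrite mulr0.
case: ifP => Hp.
- rewrite (bigD1_seq p) ?mem_index_iota ?iota_uniq //= eqxx mulr1 big1 ?addr0 //.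
  by move=> j /negbTE ->; rewrite mulr0.
- rewrite big1_seq // => j; rewrite mem_index_iota => Hj.
  by case: (eqVneq j p) => [Ejp | _]; [subst j; rewrite Hp in Hj | rewrite mulr0].
Qed.

Definition chain_weight (n m j : nat) : int :=
  (if (j <= m)%N then j%:Z else j%:Z - n.+1%:Z)%R.

Lemma chain_weight_jump n m k : 0 < m <= n -> k <= n ->
  ((if (k < n)%N then chain_weight n m k.+1 else 0)
   - (if (0 < k)%N then chain_weight n m k else 0) = 1 - n.+1%:Z * (m == k : nat)%:Z)%R.
Proof. by move=> Hm Hk; rewrite /chain_weight; case: eqP => /= ?; do !case: ifP; lia. Qed.

Lemma sum_chain_weight n m (G : nat -> int) : 0 < m <= n ->
  (\sum_(1 <= j < n.+1) chain_weight n m j * G j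
   = \sum_(1 <= j < m.+1) j%:Z * G j - \sum_(m.+1 <= j < n.+1) (n.+1 - j)%:Z * G j)%R.
Proof.
move=> Hm; rewrite (big_cat_nat _ (n := m.+1)) //=; last lia.
rewrite -sumrN; apply: f_equal2; apply: eq_big_nat => j Hj.
  by rewrite /chain_weight ifT //; lia.
have -> : chain_weight n m j = (- (n.+1 - j)%:Z)%R by rewrite /chain_weight ifN; lia.
by rewrite mulNr.
Qed.

Section CoverOrder.
Variables (T : finType) (cov : rel T).
Local Notation le := (connect cov).

(* [is_ideal], [is_max_in], [Tstat], [chi], [chiO], [TO] for the order generated
   by an arbitrary cover relation; at [covers alpha] they are those definitions,
   by conversion. *)

Definition cover_lt (a b : T) := (a != b) && le a b.
Definition cover_ideal (I : {set T}) :=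
  [forall u, forall w, le u w ==> (w \in I) ==> (u \in I)].
Definition cover_max (q : T) (I : {set T}) :=
  (q \in I) && [forall w, cover_lt q w ==> (w \notin I)].
Definition cover_T (q : T) (I : {set T}) : int :=
  if (q \notin I) && cover_ideal (q |: I) then 1%R
  else if cover_max q I then (-1)%R else 0%R.
Definition cover_chi (q : T) (I : {set T}) : int := (cover_max q I : nat)%:Z.
Definition cover_chiO (o : option T) (I : {set T}) : int :=
  if o is Some q then cover_chi q I else 0%R.
Definition cover_TO (o : option T) (I : {set T}) : int :=
  if o is Some q then cover_T q I else 0%R.

Lemma cover_ideal_down I a b : cover_ideal I -> le a b -> b \in I -> a \in I.
Proof. by move=> HI Hab; apply: (implyP (implyP (forallP (forallP HI a) b) Hab)). Qed.

Hypothesis cov_irr : irreflexive cov.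

Lemma cover_neq a b : cov a b -> a != b.
Proof. by apply: contraTneq => ->; rewrite cov_irr. Qed.

Lemma cover_maxE I q : cover_ideal I ->
  cover_max q I = (q \in I) && [forall w, cov q w ==> (w \notin I)].
Proof.
move=> HI; rewrite /cover_max; case: (q \in I) => //=.
apply/forallP/forallP => H w; apply/implyP => Hw.
- by apply: (implyP (H w)); rewrite /cover_lt cover_neq // connect1.
- case/andP: Hw => Hne /connectP [[|w1 p] /= Hp Hl]; first by rewrite Hl eqxx in Hne.
  case/andP: Hp => Hqw1 Hp; apply: contra (implyP (H w1) Hqw1) => Hw.
  by apply: cover_ideal_down HI _ Hw; apply/connectP; exists p.
Qed.

Lemma cover_ideal_setU1 I q : cover_ideal I -> q \notin I ->
  cover_ideal (q |: I) = [forall w, cov w q ==> (w \in I)].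
Proof.
move=> HI Hq; apply/idP/forallP => [HqI w | H].
- apply/implyP => Hwq.
  have := cover_ideal_down HqI (connect1 Hwq) (setU11 q I).
  by rewrite !inE (negbTE (cover_neq Hwq)).
- apply/forallP => a; apply/forallP => b; apply/implyP => Hab.
  rewrite !inE; apply/implyP; case/orP => [/eqP Eb | Hb]; last first.
    by rewrite (cover_ideal_down HI Hab Hb) orbT.
  subst b; case: (eqVneq a q) => [// | Hne].
  case/connectP: Hab => p Hp Hl.
  case/lastP: p Hp Hl => [|p w] Hp Hl; first by rewrite /= Hl eqxx in Hne.
  rewrite last_rcons in Hl; subst w; rewrite rcons_path in Hp; case/andP: Hp => Hp Hc.
  rewrite (cover_ideal_down HI _ (implyP (H _) Hc)) ?orbT //.
  by apply/connectP; exists p.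
Qed.

Section Chain.
Variables (n : nat) (u : nat -> T) (vo po : option T).
Hypothesis n_gt0 : 0 < n.
Hypothesis chain_le : forall j j', 0 < j <= n -> 0 < j' <= n ->
  le (u j) (u j') = (j <= j').
Hypothesis chain_interval : forall w, le (u 1) w -> le w (u n) ->
  exists2 j, 0 < j <= n & w = u j.
Hypothesis chain_lower_cover : forall w j, 0 < j <= n -> cov w (u j) ->
  if j == 1 then vo = Some w else w = u j.-1.
Hypothesis chain_upper_cover : forall w j, 0 < j <= n -> cov (u j) w ->
  if j == n then po = Some w else w = u j.+1.
Hypothesis valley_below : forall v, vo = Some v -> cov v (u 1) /\ forall w, ~~ cov w v.
Hypothesis peak_above : forall p, po = Some p -> cov (u n) p /\ forall w, ~~ cov p w.

Lemma chain_inj j j' : 0 < j <= n -> 0 < j' <= n -> u j = u j' -> j = j'.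
Proof.
move=> Hj Hj' E; apply/eqP.
by rewrite eqn_leq -(chain_le Hj Hj') -(chain_le Hj' Hj) E connect0.
Qed.

Lemma map_chain_uniq s : (forall j, j \in s -> 0 < j <= n) -> uniq s -> uniq (map u s).
Proof.
move=> Hs Hu; rewrite map_inj_in_uniq // => j j' /Hs Hj /Hs Hj'.
exact: chain_inj.
Qed.

Section ChainSubset.
Variables (P : pred T) (s : seq nat).
Hypotheses (Hs : forall j, j \in s -> 0 < j <= n) (Hu : uniq s).
Hypothesis HP : forall w, P w = (w \in map u s).

Lemma sum_chain (F : T -> int) : (\sum_(w | P w) F w = \sum_(j <- s) F (u j))%R.
Proof. by rewrite (eq_bigl _ _ HP) -big_uniq ?big_map //; exact: map_chain_uniq. Qed.

Lemma card_chain : #|[set w | P w]| = size s.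
Proof.
rewrite -(size_map u); have /card_uniqP <- := map_chain_uniq Hs Hu.
by apply: eq_card => w; rewrite inE HP.
Qed.

End ChainSubset.

Lemma chain_intervalE a b w : 0 < a <= b -> b <= n ->
  (le (u a) w && le w (u b)) = (w \in map u (index_iota a b.+1)).
Proof.
move=> Hab Hb; have Ha : 0 < a <= n by lia.
have Hb' : 0 < b <= n by lia.
apply/andP/mapP => [[Haw Hwb] | [j]].
- have H1w : le (u 1) w by apply: connect_trans Haw; rewrite chain_le //; lia.
  have Hwn : le w (u n) by apply: connect_trans Hwb _; rewrite chain_le //; lia.
  have [j Hj Ew] := chain_interval H1w Hwn.
  rewrite Ew !chain_le // in Haw Hwb.
  by exists j; rewrite // mem_index_iota; lia.
- rewrite mem_index_iota => Hj ->; rewrite !chain_le //; lia.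
Qed.

Lemma chain_aboveE m w : 0 < m <= n ->
  (cover_lt (u m) w && le w (u n)) = (w \in map u (index_iota m.+1 n.+1)).
Proof.
move=> Hm; apply/andP/mapP => [[/andP [Hne Hmw] Hwn] | [j]].
- have H1w : le (u 1) w by apply: connect_trans Hmw; rewrite chain_le //; lia.
  have [j Hj Ew] := chain_interval H1w Hwn.
  rewrite Ew chain_le // in Hmw; rewrite Ew in Hne.
  exists j => //; rewrite mem_index_iota; case: (eqVneq m j) Hne => [-> | ]; last lia.
  by rewrite eqxx.
- rewrite mem_index_iota => Hj ->; have Hj' : 0 < j <= n by lia.
  have Hn : 0 < n <= n by lia.
  rewrite /cover_lt !chain_le //; split; last lia.
  rewrite (_ : m <= j) ?andbT; last lia.
  by apply: (contra_neq (chain_inj Hm Hj')); lia.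
Qed.

Lemma mem_index_iota_chain a b j : 0 < a -> b <= n.+1 -> j \in index_iota a b -> 0 < j <= n.
Proof. by move=> Ha Hb; rewrite mem_index_iota; lia. Qed.

Lemma sum_below_chain m (F : T -> int) : 0 < m <= n ->
  (\sum_(w | le (u 1) w && le w (u m)) #|[set w' | le (u 1) w' && le w' w]|%:Z * F w
   = \sum_(1 <= j < m.+1) j%:Z * F (u j))%R.
Proof.
move=> Hm; rewrite (sum_chain (s := index_iota 1 m.+1)) ?iota_uniq //; last 2 first.
- by move=> j; apply: mem_index_iota_chain; lia.
- by move=> w; rewrite chain_intervalE //; lia.
apply: eq_big_nat => j Hj.
rewrite (card_chain (s := index_iota 1 j.+1)) ?size_iota ?subn1 ?iota_uniq //.
- by move=> j'; apply: mem_index_iota_chain; lia.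
- by move=> w; rewrite chain_intervalE //; lia.
Qed.

Lemma sum_above_chain m (F : T -> int) : 0 < m <= n ->
  (\sum_(w | cover_lt (u m) w && le w (u n)) #|[set w' | le w w' && le w' (u n)]|%:Z * F w
   = \sum_(m.+1 <= j < n.+1) (n.+1 - j)%:Z * F (u j))%R.
Proof.
move=> Hm; rewrite (sum_chain (s := index_iota m.+1 n.+1)) ?iota_uniq //; last 2 first.
- by move=> j; apply: mem_index_iota_chain; lia.
- by move=> w; rewrite chain_aboveE.
apply: eq_big_nat => j Hj.
rewrite (card_chain (s := index_iota j n.+1)) ?size_iota ?iota_uniq //.
- by move=> j'; apply: mem_index_iota_chain; lia.
- by move=> w; rewrite chain_intervalE //; lia.
Qed.

Variable I : {set T}.
Hypothesis I_ideal : cover_ideal I.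

Definition ideal_cut := find (fun j => u j.+1 \notin I) (iota 0 n).
Local Notation k := ideal_cut.

Lemma ideal_cut_le : k <= n.
Proof. by rewrite /ideal_cut -[leqRHS](size_iota 0 n) find_size. Qed.

Lemma chain_in_ideal j : 0 < j <= n -> (u j \in I) = (j <= k).
Proof.
move=> Hj; apply/idP/idP => [Hin | Hjk].
- rewrite leqNgt; apply/negP => Hkj; have Hkn : k < n by lia.
  have := @nth_find _ 0 (fun j => u j.+1 \notin I) (iota 0 n).
  rewrite -/k has_find size_iota nth_iota // add0n => /(_ Hkn) /negP; apply.
  by apply: (cover_ideal_down I_ideal _ Hin); rewrite chain_le //; lia.
- have := @before_find _ 0 (fun j => u j.+1 \notin I) (iota 0 n) j.-1.
  rewrite -/k nth_iota; last by have := ideal_cut_le; lia.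
  by rewrite add0n prednK; [move=> /(_ _)/negbFE; apply; lia | lia].
Qed.

Definition valley_out := if vo is Some v then v \notin I else false.
Definition peak_in := if po is Some p then p \in I else false.

Lemma valley_out_cut : valley_out -> k = 0.
Proof.
rewrite /valley_out; case E: vo => [v|] // Hv; apply/eqP; rewrite -leqn0 leqNgt.
move: Hv; apply: contra => Hk.
by apply: (cover_ideal_down I_ideal (connect1 (valley_below E).1)); rewrite chain_in_ideal.
Qed.

Lemma peak_in_cut : peak_in -> k = n.
Proof.
rewrite /peak_in; case E: po => [p|] // Hp.
have := cover_ideal_down I_ideal (connect1 (peak_above E).1) Hp.
by rewrite chain_in_ideal ?leqnn ?n_gt0 //; have := ideal_cut_le; lia.
Qed.

Lemma chain_max j : 0 < j <= n -> cover_max (u j) I = ~~ peak_in && (j == k).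
Proof.
move=> Hj; case: (ltngtP j k) => Hjk.
- have Hj1 : 0 < j.+1 <= n by have := ideal_cut_le; lia.
  rewrite andbF; apply/negbTE; rewrite negb_and negb_forall; apply/orP; right.
  apply/existsP; exists (u j.+1); rewrite negb_imply negbK chain_in_ideal // Hjk andbT.
  rewrite /cover_lt chain_le // leqnSn andbT.
  by apply: (contra_neq (chain_inj Hj Hj1)); lia.
- by rewrite andbF /cover_max chain_in_ideal // leqNgt Hjk.
- subst j; rewrite andbT cover_maxE // chain_in_ideal // leqnn /=.
  case: (eqVneq k n) => [Ekn | Hkn].
  + case Hf: peak_in.
    * move: Hf; rewrite /peak_in; case E: po => [p|] // Hp.
      apply/negbTE; rewrite negb_forall; apply/existsP; exists p.
      by rewrite negb_imply Hp Ekn (peak_above E).1.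
    * apply/forallP => w; apply/implyP => Hw.
      move: (chain_upper_cover Hj Hw); rewrite Ekn eqxx => Ep.
      by move: Hf; rewrite /peak_in Ep => ->.
  + have -> : peak_in = false.
      by apply/negP => /peak_in_cut Ekn; rewrite Ekn eqxx in Hkn.
    apply/forallP => w; apply/implyP => Hw.
    move: (chain_upper_cover Hj Hw); rewrite (negbTE Hkn) => ->.
    by rewrite chain_in_ideal; have := ideal_cut_le; lia.
Qed.

Lemma chain_addable j : 0 < j <= n ->
  (u j \notin I) && cover_ideal (u j |: I) = ~~ valley_out && (j == k.+1).
Proof.
move=> Hj; case: (leqP j k) => Hjk.
  have -> : (j == k.+1) = false by apply/eqP; lia.
  by rewrite chain_in_ideal // Hjk andbF.
have Hout : u j \notin I by rewrite chain_in_ideal // -ltnNge.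
rewrite Hout /=; case: (eqVneq j k.+1) => [Ejk | Hne]; last first.
  have Hj1 : 0 < j.-1 <= n by lia.
  rewrite andbF; apply/negP => HU.
  have Hle : le (u j.-1) (u j) by rewrite chain_le // leq_pred.
  have := cover_ideal_down HU Hle (setU11 _ _).
  rewrite !inE chain_in_ideal // (_ : j.-1 <= k = false); last lia.
  by rewrite orbF => /eqP /(chain_inj Hj1 Hj); lia.
subst j; rewrite andbT cover_ideal_setU1 //.
case: (eqVneq k 0) => [Ek0 | Hk0].
- case He: valley_out.
  + move: He; rewrite /valley_out; case E: vo => [v|] // Hv.
    apply/negbTE; rewrite negb_forall; apply/existsP; exists v.
    by rewrite negb_imply (negbTE Hv) Ek0 (valley_below E).1.
  + apply/forallP => w; apply/implyP => Hw.
    move: (chain_lower_cover Hj Hw); rewrite Ek0 eqxx => Ev.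
    by move: He; rewrite /valley_out Ev => /negbFE.
- have -> : valley_out = false.
    by apply/negP => /valley_out_cut Ek0; rewrite Ek0 eqxx in Hk0.
  apply/forallP => w; apply/implyP => Hw.
  move: (chain_lower_cover Hj Hw); rewrite eqSS (negbTE Hk0) /= => ->.
  by rewrite chain_in_ideal //; lia.
Qed.

Lemma chain_T j : 0 < j <= n -> cover_T (u j) I =
  ((~~ valley_out && (j == k.+1) : nat)%:Z - (~~ peak_in && (j == k) : nat)%:Z)%R.
Proof.
move=> Hj; rewrite /cover_T chain_addable // chain_max //.
case: (eqVneq j k.+1) => [-> | _]; rewrite ?andbF; last by case: (_ && _).
by rewrite (gtn_eqF (ltnSn _)) andbF; case: (~~ _).
Qed.

Lemma valley_chi_T : (cover_chiO vo I + cover_TO vo I = (valley_out : nat)%:Z)%R.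
Proof.
rewrite /cover_chiO /cover_TO /valley_out; case E: vo => [v|] //.
have Hmin := (valley_below E).2.
rewrite /cover_chi /cover_T; case Hv: (v \in I) => /=; first by case: (cover_max v I).
have Hfree : [forall w, cov w v ==> (w \in I)].
  by apply/forallP => w; rewrite (negbTE (Hmin w)).
by rewrite /cover_max Hv cover_ideal_setU1 ?Hv ?Hfree.
Qed.

Lemma peak_chi : (cover_chiO po I = (peak_in : nat)%:Z)%R.
Proof.
rewrite /cover_chiO /peak_in; case E: po => [p|] //.
have Hmax := (peak_above E).2.
have Hfree : [forall w, cov p w ==> (w \notin I)].
  by apply/forallP => w; rewrite (negbTE (Hmax w)).
by rewrite /cover_chi cover_maxE // Hfree andbT.
Qed.

Lemma sum_chain_T (c : nat -> int) :
  (\sum_(1 <= j < n.+1) c j * cover_T (u j) I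
   = (if ~~ valley_out && (k < n)%N then c k.+1 else 0)
     - (if ~~ peak_in && (0 < k)%N then c k else 0))%R.
Proof.
rewrite (eq_big_nat _ _ (fun j (Hj : 1 <= j < n.+1) => congr1 (fun t => c j * t)%R
  (chain_T (ltac:(lia) : 0 < j <= n)))).
under eq_bigr do rewrite mulrBr.
by rewrite sumrB !sum_nat_indicator !ltnS ideal_cut_le !andbT.
Qed.

Lemma chain_identity m : 0 < m <= n ->
  (n.+1%:Z * cover_chi (u m) I + cover_chiO vo I + cover_chiO po I =
   1 - cover_TO vo I
   - \sum_(w | le (u 1) w && le w (u m))
       #|[set w' | le (u 1) w' && le w' w]|%:Z * cover_T w I
   + \sum_(w | cover_lt (u m) w && le w (u n))
       #|[set w' | le w w' && le w' (u n)]|%:Z * cover_T w I)%R.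
Proof.
move=> Hm; rewrite sum_below_chain // sum_above_chain //.
have := sum_chain_T (chain_weight n m); rewrite sum_chain_weight //.
have := chain_weight_jump Hm ideal_cut_le.
have := valley_chi_T; have := peak_chi; rewrite /cover_chi chain_max //.
case He: valley_out; case Hf: peak_in => /=.
- by have := peak_in_cut Hf; rewrite (valley_out_cut He); lia.
- by rewrite (valley_out_cut He) /=; case: eqP => /= ?; lia.
- by rewrite (peak_in_cut Hf) ltnn /=; lia.
- by case: eqP => /= ?; lia.
Qed.

End Chain.
End CoverOrder.

Section Fence.
Variable alpha : seq nat.
Hypothesis alpha_pos : all (fun a => 0 < a) alpha.
Hypothesis head_ge2 : 2 <= head 0 alpha.
Hypothesis last_ge2 : 2 <= last 0 alpha.
Local Notation t := (size alpha).
Local Notation N := (fence_n alpha).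
(* [up q]: the cover between the ordinals q and q.+1, i.e. between x_{q+1}
   and x_{q+2}, goes up. *)
Local Notation up j := (dir_up alpha j.+1).

Lemma aposS l : apos alpha l.+1 = apos alpha l + nth 0 alpha l.
Proof.
rewrite /apos; case: (ltnP l t) => Hl; first by rewrite (take_nth 0 Hl) sumn_rcons.
by rewrite nth_default // addn0 !take_oversize // leqW.
Qed.

Lemma leq_apos k l : k <= l -> apos alpha k <= apos alpha l.
Proof. by move=> Hkl; rewrite /apos -(subnKC Hkl) takeD sumn_cat leq_addr. Qed.

Lemma ltn_apos k l : k < l -> l <= t -> apos alpha k < apos alpha l.
Proof.
case: l => [//|l] Hkl Hl; rewrite aposS.
have := leq_apos (ltnSE Hkl); have := all_nthP 0 alpha_pos l Hl; lia.
Qed.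

Lemma apos_ge2 k : 0 < k -> 2 <= apos alpha k.
Proof. by move=> Hk; apply: leq_trans (leq_apos Hk); rewrite aposS /apos take0 nth0. Qed.

Lemma alpha_size_gt0 : 0 < t.
Proof. by case: alpha head_ge2. Qed.

Lemma apos_size : apos alpha t = N.+1.
Proof. by have := apos_ge2 alpha_size_gt0; rewrite /fence_n; lia. Qed.

Lemma apos_last : apos alpha t.-1 + 2 <= apos alpha t.
Proof. by rewrite -{2}(prednK alpha_size_gt0) aposS nth_last leq_add2l. Qed.

Lemma dir_upE i j : 0 < i <= t -> apos alpha i.-1 <= j < apos alpha i ->
  dir_up alpha j = ~~ odd i.-1.
Proof.
move=> Hi Hj; apply/existsP/idP => [[k /andP [/andP [Hk1 Hk2] Ho]] | Ho].
- have -> : i.-1 = k; last by [].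
  case: (ltngtP k i.-1) => Hk //.
  + by have := leq_apos Hk; lia.
  + by have := @leq_apos i k (ltac:(lia)); lia.
- have Hi' : i.-1 < t by lia.
  by exists (Ordinal Hi'); rewrite /= Ho andbT prednK //; lia.
Qed.

Lemma coversE (a b : 'I_N) :
  covers alpha a b = ((b == a.+1 :> nat) && up a) || ((a == b.+1 :> nat) && ~~ up b).
Proof. by rewrite /covers !eqSS. Qed.

Lemma covers_irr : irreflexive (covers alpha).
Proof. by move=> a; rewrite coversE !ltn_eqF. Qed.

Definition fence_run (a b : nat) :=
  (a <= b /\ forall s, a <= s < b -> up s) \/ (b <= a /\ forall s, b <= s < a -> ~~ up s).

Lemma fence_run_cover (a c : 'I_N) (w : nat) :
  covers alpha a c -> fence_run c w -> fence_run a w.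
Proof.
rewrite coversE; case/orP => /andP [/eqP Ec Hu] [[Hw1 Hw2] | [Hw1 Hw2]].
- left; split=> [|s Hs]; first lia.
  by case: (eqVneq s a) => [-> // | Hne]; apply: Hw2; lia.
- case: (eqVneq w c) => Hwc; last by have /negP[] := Hw2 a (ltac:(lia)).
  by left; split=> [|s Hs]; [lia | rewrite (_ : s = a) //; lia].
- case: (eqVneq w c) => Hwc; last by have := Hw2 c (ltac:(lia)); rewrite (negbTE Hu).
  by right; split=> [|s Hs]; [lia | rewrite (_ : s = c) //; lia].
- right; split=> [|s Hs]; first lia.
  by case: (eqVneq s c) => [-> // | Hne]; apply: Hw2; lia.
Qed.

Lemma fle_up_run l (a b : 'I_N) : b = a + l :> nat ->
  (forall s, a <= s < b -> up s) -> fle alpha a b.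
Proof.
rewrite /fle; elim: l a => [|l IH] a Hab Hs; first by rewrite (val_inj (etrans Hab (addn0 a))) connect0.
have Ha1 : a.+1 < N by have := ltn_ord b; lia.
apply: (@connect_trans _ _ (Ordinal Ha1)).
  by apply: connect1; rewrite coversE /= eqxx Hs //=; lia.
by apply: IH => /= [|s Hs']; [lia | apply: Hs; lia].
Qed.

Lemma fle_down_run l (a b : 'I_N) : a = b + l :> nat ->
  (forall s, b <= s < a -> ~~ up s) -> fle alpha a b.
Proof.
rewrite /fle; elim: l b => [|l IH] b Hab Hs; first by rewrite (val_inj (etrans Hab (addn0 b))) connect0.
have Hb1 : b.+1 < N by have := ltn_ord a; lia.
apply: (@connect_trans _ _ (Ordinal Hb1)).
  by apply: IH => /= [|s Hs']; [lia | apply: Hs; lia].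
by apply: connect1; rewrite coversE /= eqxx Hs ?orbT //=; lia.
Qed.

Lemma fleP (a b : 'I_N) : fle alpha a b <-> fence_run a b.
Proof.
split=> [/connectP [p Hp ->] | [[Hab Hs] | [Hba Hs]]].
- elim: p a Hp => [|c p IH] a /=; first by left; split=> // s; lia.
  by case/andP => Hac Hp; apply: fence_run_cover Hac (IH c Hp).
- by apply: (@fle_up_run (b - a)) => //; lia.
- by apply: (@fle_down_run (a - b)) => //; lia.
Qed.

Lemma pick_eq_some (P : pred 'I_N) w : (forall q, P q = (q == w)) -> [pick q | P q] = Some w.
Proof.
move=> HP; case: pickP => [q | /(_ w)]; last by rewrite HP eqxx.
by rewrite HP => /eqP ->.
Qed.

Lemma mem_shared (q : 'I_N) k : 0 < k < t -> q.+1 = apos alpha k -> q \in shared alpha.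
Proof.
move=> Hk E; rewrite inE; apply/existsP; have Hk' : k < t by lia.
by exists (Ordinal Hk'); rewrite /= E eqxx andbT; lia.
Qed.

Lemma is_valley_dir (q : 'I_N) : is_valley alpha q -> [/\ 0 < q, up q & ~~ up q.-1].
Proof.
rewrite /is_valley => /eqP Hc.
have /card_gt1P [a [b [Ha Hb Hab]]] : 1 < #|[set w | covers alpha q w]| by rewrite Hc.
have {}Hab : a != b :> nat by [].
rewrite !inE !coversE in Ha Hb.
case/orP: Ha => /andP [/eqP Ea Ua]; case/orP: Hb => /andP [/eqP Eb Ub].
- by rewrite Ea Eb eqxx in Hab.
- by split; [lia | | rewrite (_ : q.-1 = b) //; lia].
- by split; [lia | | rewrite (_ : q.-1 = a) //; lia].
- by rewrite (_ : a = b :> nat) ?eqxx // in Hab; lia.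
Qed.

Lemma is_peak_dir (q : 'I_N) : is_peak alpha q -> [/\ 0 < q, ~~ up q & up q.-1].
Proof.
rewrite /is_peak => /eqP Hc.
have /card_gt1P [a [b [Ha Hb Hab]]] : 1 < #|[set w | covers alpha w q]| by rewrite Hc.
have {}Hab : a != b :> nat by [].
rewrite !inE !coversE in Ha Hb.
case/orP: Ha => /andP [/eqP Ea Ua]; case/orP: Hb => /andP [/eqP Eb Ub].
- by rewrite (_ : a = b :> nat) ?eqxx // in Hab; lia.
- by split; [lia | | rewrite (_ : q.-1 = a) //; lia].
- by split; [lia | | rewrite (_ : q.-1 = b) //; lia].
- by rewrite Ea Eb eqxx in Hab.
Qed.

Lemma is_valley_min (q w : 'I_N) : is_valley alpha q -> ~~ covers alpha w q.
Proof.
case/is_valley_dir => _ Hu Hd; rewrite coversE; apply/negP; case/orP => /andP [/eqP E Hw].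
- by move: Hd; rewrite (_ : q.-1 = w) ?Hw //; lia.
- by rewrite Hu in Hw.
Qed.

Lemma is_peak_max (q w : 'I_N) : is_peak alpha q -> ~~ covers alpha q w.
Proof.
case/is_peak_dir => _ Hu Hd; rewrite coversE; apply/negP; case/orP => /andP [/eqP E Hw].
- by rewrite Hw in Hu.
- by move: Hd; rewrite (_ : q.-1 = w) ?(negbTE Hw) //; lia.
Qed.

Lemma dir_is_valley (q : 'I_N) : 0 < q -> q.+1 < N -> up q -> ~~ up q.-1 -> is_valley alpha q.
Proof.
move=> Hq0 HqN Hu Hd; have Hq1 : q.-1 < N by lia.
rewrite /is_valley (_ : [set w | covers alpha q w] = [set Ordinal HqN; Ordinal Hq1]).
  by rewrite cards2 -val_eqE /= (_ : q.+1 == q.-1 = false) //; apply/eqP; lia.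
apply/setP => w; rewrite !inE coversE -!val_eqE /= Hu andbT; congr (_ || _).
apply/andP/eqP => [[/eqP E _] | E]; first lia.
by split; [apply/eqP; lia | rewrite E].
Qed.

Lemma dir_is_peak (q : 'I_N) : 0 < q -> q.+1 < N -> ~~ up q -> up q.-1 -> is_peak alpha q.
Proof.
move=> Hq0 HqN Hu Hd; have Hq1 : q.-1 < N by lia.
rewrite /is_peak (_ : [set w | covers alpha w q] = [set Ordinal HqN; Ordinal Hq1]).
  by rewrite cards2 -val_eqE /= (_ : q.+1 == q.-1 = false) //; apply/eqP; lia.
apply/setP => w; rewrite !inE coversE -!val_eqE /= Hu andbT orbC; congr (_ || _).
apply/andP/eqP => [[/eqP E _] | E]; first lia.
by split; [apply/eqP; lia | rewrite E].
Qed.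

Section Segment.
Variable i : nat.
Hypothesis Hi : 0 < i <= t.
Hypothesis Hai : 2 <= nth 0 alpha i.-1.
Variable w0 : 'I_N.
(* [A] = a_{i-1}, [bt] = beta_i, and [d] says that S_i goes up. *)
Local Notation A := (apos alpha i.-1).
Local Notation bt := (nth 0 alpha i.-1).-1.
Local Notation d := (~~ odd i.-1).

Lemma apos_seg : apos alpha i = A + bt + 1.
Proof. by rewrite -{1}(prednK (proj1 (andP Hi))) aposS; lia. Qed.

Lemma seg_end_le : A + bt <= N.
Proof. by have := @leq_apos i t (ltac:(lia)); rewrite apos_size apos_seg; lia. Qed.

Lemma dir_seg s : A <= s.+1 < A + bt + 1 -> up s = d.
Proof. by move=> Hs; apply: dir_upE => //; rewrite apos_seg. Qed.

Lemma dir_before_seg : 1 < i -> up (A - 2) = ~~ d.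
Proof.
move=> Hi1; have HA := @ltn_apos i.-2 i.-1 (ltac:(lia)) (ltac:(lia)).
have HA2 := @apos_ge2 i.-1 (ltac:(lia)).
rewrite (@dir_upE i.-1); [ | lia | lia].
by rewrite (_ : i.-1 = i.-2.+1) /= ?negbK //; lia.
Qed.

Lemma dir_after_seg : i < t -> up (A + bt) = ~~ d.
Proof.
move=> Hit; have := @ltn_apos i i.+1 (ltnSn _) Hit; rewrite apos_seg => HA.
rewrite (@dir_upE i.+1) /=; [ | lia | rewrite apos_seg; lia].
by rewrite -{1}(prednK (proj1 (andP Hi))).
Qed.

Lemma seg_not_first : 0 < A -> 1 < i.
Proof. by case: (ltngtP i 1) => // Hi1; [lia | rewrite Hi1 /apos take0]. Qed.

Lemma seg_not_last (q : 'I_N) : q = A + bt :> nat -> i < t.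
Proof.
move=> Hq; case: (ltngtP i t) => // Hit; first lia.
by have := ltn_ord q; have := apos_size; rewrite -Hit apos_seg; lia.
Qed.

Lemma seg_end_lt : i < t -> A + bt + 2 <= N.
Proof.
move=> Hit; have := @leq_apos i t.-1 (ltac:(lia)); have := apos_last.
by rewrite apos_size apos_seg; lia.
Qed.

Lemma mem_seg (q : 'I_N) : A <= q.+1 <= A + bt + 1 -> q \in seg alpha i.
Proof. by rewrite inE apos_seg. Qed.

Lemma seg_shared_ends (q : 'I_N) : q \in seg alpha i :&: shared alpha ->
  q.+1 = A \/ q = A + bt :> nat.
Proof.
rewrite !inE apos_seg => /andP [/andP [Ha Hb] /existsP [k /andP [Hk /eqP E]]].
case: (ltngtP q.+1 A) => HA; [lia | | by left].
case: (ltngtP (q : nat) (A + bt)) => HB; [ | lia | by right].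
case: (leqP k i.-1) => Hk'; first by have := leq_apos Hk'; lia.
by have := @leq_apos i k (ltac:(lia)); rewrite apos_seg; lia.
Qed.

Lemma seg_start_shared (w : 'I_N) : w.+1 = A ->
  [/\ w \in seg alpha i :&: shared alpha, 0 < w, w.+1 < N, up w = d & up w.-1 = ~~ d].
Proof.
move=> Hw; have Hi1 : 1 < i by apply: seg_not_first; lia.
have HA2 := apos_ge2 (ltac:(lia) : 0 < i.-1); have HAb := seg_end_le.
split; try lia.
- by apply/setIP; split; [apply: mem_seg | apply: (@mem_shared _ i.-1)]; lia.
- by rewrite dir_seg //; lia.
- by rewrite (_ : w.-1 = A - 2) ?dir_before_seg //; lia.
Qed.

Lemma seg_end_shared (w : 'I_N) : w = A + bt :> nat ->
  [/\ w \in seg alpha i :&: shared alpha, 0 < w, w.+1 < N, up w = ~~ d & up w.-1 = d].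
Proof.
move=> Hw; have Hit := seg_not_last Hw; have HAb := seg_end_lt Hit.
split; try lia.
- by apply/setIP; split; [apply: mem_seg | apply: (@mem_shared _ i); rewrite ?apos_seg]; lia.
- by rewrite Hw dir_after_seg.
- by rewrite dir_seg //; lia.
Qed.

Lemma unsharedE (w : 'I_N) : (w \in unshared alpha i) = (A <= w < A + bt).
Proof.
rewrite /unshared in_setD; apply/andP/idP => [[Hns] | Hw].
- rewrite inE apos_seg => Hseg.
  have HA : w.+1 != A by apply: contraNneq Hns => /seg_start_shared [/setIP [_ ->]].
  have HB : w != A + bt :> nat by apply: contraNneq Hns => /seg_end_shared [/setIP [_ ->]].
  lia.
- have Hseg : w \in seg alpha i by apply: mem_seg; lia.
  split=> //; apply/negP => Hsh.
  by case: (seg_shared_ends (introT setIP (conj Hseg Hsh))); lia.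
Qed.

(* u_j, as an ordinal; [w0] is only the default of [insubd] for j outside 1..bt. *)
Definition chain_pos j := if d then (A + j).-1 else A + bt - j.
Definition seg_chain j : 'I_N := insubd w0 (chain_pos j).

Lemma val_seg_chain j : 0 < j <= bt -> seg_chain j = chain_pos j :> nat.
Proof.
move=> Hj; rewrite /seg_chain val_insubd; have := seg_end_le; rewrite /chain_pos.
by case: (odd i.-1) => /= HAb; rewrite ifT //; lia.
Qed.

Lemma unshared_seg_chain w : w \in unshared alpha i -> exists2 j, 0 < j <= bt & w = seg_chain j.
Proof.
rewrite unsharedE => Hw.
exists (if d then w - A + 1 else A + bt - w); first by case: d; lia.
apply: val_inj => /=; rewrite val_seg_chain; last by case: d; lia.
by rewrite /chain_pos; case: d; lia.
Qed.

Lemma seg_chain_unshared j : 0 < j <= bt -> seg_chain j \in unshared alpha i.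
Proof. by move=> Hj; rewrite unsharedE val_seg_chain // /chain_pos; case: d; lia. Qed.

Lemma fle_seg_chain j j' : 0 < j <= bt -> 0 < j' <= bt ->
  fle alpha (seg_chain j) (seg_chain j') = (j <= j').
Proof.
move=> Hj Hj'; apply/idP/idP => [/fleP | Hjj]; last first.
  apply/fleP; rewrite /fence_run !val_seg_chain // /chain_pos.
  by case Hd: d; [left | right]; split=> [|s Hs]; try lia; rewrite dir_seg ?Hd //; lia.
rewrite /fence_run !val_seg_chain // /chain_pos.
case Hd: d; case=> [[Ha Hb] | [Ha Hb]]; try lia; case: (leqP j j') => // Hlt.
- by have := Hb (A + j').-1 (ltac:(lia)); rewrite dir_seg ?Hd //; lia.
- by have := Hb (A + bt - j) (ltac:(lia)); rewrite dir_seg ?Hd //; lia.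
Qed.

Lemma flt_seg_chain j j' : 0 < j <= bt -> 0 < j' <= bt ->
  flt alpha (seg_chain j) (seg_chain j') = (j < j').
Proof.
move=> Hj Hj'; rewrite /flt fle_seg_chain // ltn_neqAle; congr (~~ _ && _).
apply/eqP/eqP => [/(congr1 (@nat_of_ord _)) | -> //].
by rewrite !val_seg_chain // /chain_pos; case: d; lia.
Qed.

Lemma seg_chain_interval w : fle alpha (seg_chain 1) w -> fle alpha w (seg_chain bt) ->
  exists2 j, 0 < j <= bt & w = seg_chain j.
Proof.
have Hb1 : 0 < 1 <= bt by lia.
have Hbb : 0 < bt <= bt by lia.
move=> /fleP Hlo /fleP Hhi; apply: unshared_seg_chain; rewrite unsharedE.
move: Hlo Hhi; rewrite /fence_run !val_seg_chain // /chain_pos.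
case Hd: d => Hlo Hhi; apply/andP; split.
- case: Hlo => [[Ha _] | [Ha Hb]]; first lia.
  rewrite leqNgt; apply/negP => Hlt.
  by have := Hb A.-1 (ltac:(lia)); rewrite dir_seg ?Hd //; lia.
- case: Hhi => [[Ha _] | [Ha Hb]]; first lia.
  rewrite ltnNge; apply/negP => Hlt.
  by have := Hb (A + bt).-1 (ltac:(lia)); rewrite dir_seg ?Hd //; lia.
- case: Hhi => [[Ha Hb] | [Ha _]]; last lia.
  rewrite leqNgt; apply/negP => Hlt.
  by have := Hb A.-1 (ltac:(lia)); rewrite dir_seg ?Hd //; lia.
- case: Hlo => [[Ha Hb] | [Ha _]]; last lia.
  rewrite ltnNge; apply/negP => Hlt.
  by have := Hb (A + bt - 1) (ltac:(lia)); rewrite dir_seg ?Hd //; lia.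
Qed.

Lemma covers_seg_chain_lower (w : 'I_N) j : 0 < j <= bt -> covers alpha w (seg_chain j) ->
  if j == 1 then (if d then w.+1 = A else w = A + bt :> nat) else w = seg_chain j.-1.
Proof.
move=> Hj; rewrite coversE val_seg_chain // /chain_pos.
case Hd: d; case/orP => /andP [/eqP E Hu]; try by move: Hu; rewrite dir_seg ?Hd //; lia.
all: case: (eqVneq j 1) => [Ej | Hne]; first lia.
all: by apply: val_inj; rewrite /= val_seg_chain /chain_pos ?Hd; lia.
Qed.

Lemma covers_seg_chain_upper (w : 'I_N) j : 0 < j <= bt -> covers alpha (seg_chain j) w ->
  if j == bt then (if d then w = A + bt :> nat else w.+1 = A) else w = seg_chain j.+1.
Proof.
move=> Hj; rewrite coversE val_seg_chain // /chain_pos.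
case Hd: d; case/orP => /andP [/eqP E Hu]; try by move: Hu; rewrite dir_seg ?Hd //; lia.
all: case: (eqVneq j bt) => [Ej | Hne]; first lia.
all: by apply: val_inj; rewrite /= val_seg_chain /chain_pos ?Hd; lia.
Qed.

Lemma valley_of_some (w : 'I_N) : (if d then w.+1 = A else w = A + bt :> nat) ->
  valley_of alpha i = Some w.
Proof.
move=> Hw; apply: pick_eq_some => q; apply/andP/eqP => [[Hq Hv] | ->].
- have [_ Hu _] := is_valley_dir Hv; apply: val_inj.
  case: (seg_shared_ends Hq) => Eq.
  + have [_ _ _ E _] := seg_start_shared Eq.
    by move: Hw; rewrite -E Hu /=; lia.
  + have [_ _ _ E _] := seg_end_shared Eq.
    by move: Hu Hw; rewrite E; case: d => //= _; lia.
- move: Hw; case: ifP => Hd Hw.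
  + have [Hs Hw0 HwN E1 E2] := seg_start_shared Hw.
    by split=> //; apply: dir_is_valley; rewrite ?E1 ?E2 ?Hd.
  + have [Hs Hw0 HwN E1 E2] := seg_end_shared Hw.
    by split=> //; apply: dir_is_valley; rewrite ?E1 ?E2 ?Hd.
Qed.

Lemma peak_of_some (w : 'I_N) : (if d then w = A + bt :> nat else w.+1 = A) ->
  peak_of alpha i = Some w.
Proof.
move=> Hw; apply: pick_eq_some => q; apply/andP/eqP => [[Hq Hp] | ->].
- have [_ Hu _] := is_peak_dir Hp; apply: val_inj.
  case: (seg_shared_ends Hq) => Eq.
  + have [_ _ _ E _] := seg_start_shared Eq.
    by move: Hu Hw; rewrite E; case: d => //= _; lia.
  + have [_ _ _ E _] := seg_end_shared Eq.
    by move: Hw; rewrite -[d]negbK -E (negbTE Hu) /=; lia.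
- move: Hw; case: ifP => Hd Hw.
  + have [Hs Hw0 HwN E1 E2] := seg_end_shared Hw.
    by split=> //; apply: dir_is_peak; rewrite ?E1 ?E2 ?Hd.
  + have [Hs Hw0 HwN E1 E2] := seg_start_shared Hw.
    by split=> //; apply: dir_is_peak; rewrite ?E1 ?E2 ?Hd.
Qed.

Lemma valley_of_below v : valley_of alpha i = Some v ->
  covers alpha v (seg_chain 1) /\ forall w, ~~ covers alpha w v.
Proof.
rewrite /valley_of; case: pickP => // q /andP [Hq Hv] [<-].
split=> [|w]; last exact: is_valley_min.
have [_ Hu _] := is_valley_dir Hv.
rewrite coversE val_seg_chain /chain_pos; last lia.
case: (seg_shared_ends Hq) => Eq.
- have [_ _ _ E _] := seg_start_shared Eq; rewrite E in Hu.
  by rewrite E Hu /= andbT; apply/orP; left; apply/eqP; lia.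
- have [_ _ _ E _] := seg_end_shared Eq; rewrite E in Hu.
  rewrite (negbTE Hu) (dir_seg (s := A + bt - 1)) ?(negbTE Hu) /=; last lia.
  by rewrite andbT; apply/orP; right; apply/eqP; lia.
Qed.

Lemma peak_of_above p : peak_of alpha i = Some p ->
  covers alpha (seg_chain bt) p /\ forall w, ~~ covers alpha p w.
Proof.
rewrite /peak_of; case: pickP => // q /andP [Hq Hp] [<-].
split=> [|w]; last exact: is_peak_max.
have [_ Hu _] := is_peak_dir Hp.
rewrite coversE val_seg_chain /chain_pos; last lia.
case: (seg_shared_ends Hq) => Eq.
- have [_ _ _ E _] := seg_start_shared Eq; rewrite E in Hu.
  by rewrite E (negbTE Hu) /= andbT; apply/orP; right; apply/eqP; lia.
- have [_ _ _ E _] := seg_end_shared Eq; rewrite E negbK in Hu.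
  by rewrite Hu (dir_seg (s := (A + bt).-1)) ?Hu /= ?andbT; [apply/orP; left; apply/eqP | ]; lia.
Qed.

Lemma seg_chain_lower_cover (w : 'I_N) j : 0 < j <= bt -> covers alpha w (seg_chain j) ->
  if j == 1 then valley_of alpha i = Some w else w = seg_chain j.-1.
Proof.
move=> Hj /(covers_seg_chain_lower Hj); case: (j == 1) => //.
exact: valley_of_some.
Qed.

Lemma seg_chain_upper_cover (w : 'I_N) j : 0 < j <= bt -> covers alpha (seg_chain j) w ->
  if j == bt then peak_of alpha i = Some w else w = seg_chain j.+1.
Proof.
move=> Hj /(covers_seg_chain_upper Hj); case: (j == bt) => //.
exact: peak_of_some.
Qed.

Lemma is_sij_seg_chain j w : 0 < j <= bt -> is_sij alpha i j w -> w = seg_chain j.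
Proof.
move=> Hj /andP [/unshared_seg_chain [j' Hj' ->] /eqP Hcard].
have Hs l : l \in index_iota 1 j' -> 0 < l <= bt by rewrite mem_index_iota; lia.
have HP w' : (w' \in unshared alpha i) && flt alpha w' (seg_chain j')
             = (w' \in map seg_chain (index_iota 1 j')).
  apply/andP/mapP => [[/unshared_seg_chain [l Hl ->]] | [l Hl ->]].
  - by rewrite flt_seg_chain // => Hlj; exists l; rewrite // mem_index_iota; lia.
  - have Hl' := Hs _ Hl; rewrite mem_index_iota in Hl.
    by split; [exact: seg_chain_unshared | rewrite flt_seg_chain //; lia].
move: Hcard; rewrite (card_chain fle_seg_chain Hs (iota_uniq _ _) HP) size_iota => E.
by congr seg_chain; lia.
Qed.

End Segment.
End Fence.

Local Open Scope ring_scope.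

Theorem theorem3p1 (alpha : seq nat)
  (Hpos : all (fun a => 0 < a)%N alpha)
  (Ht : (2 <= size alpha)%N)
  (H1 : (2 <= head 0 alpha)%N) (Htl : (2 <= last 0 alpha)%N)
  (i : nat) (Hi : (1 <= i <= size alpha)%N) (Hai : (2 <= nth 0 alpha i.-1)%N)
  (x y z : fenceT alpha)
  (Hx : x \in unshared alpha i)
  (Hy : is_sij alpha i 1 y)
  (Hz : is_sij alpha i (beta alpha i) z)
  (I : {set fenceT alpha}) (HI : is_ideal alpha I) :
  (nth 0%N alpha i.-1)%:Z * chi alpha x I
    + chiO alpha (valley_of alpha i) I + chiO alpha (peak_of alpha i) I
  = 1 - TO alpha (valley_of alpha i) I
      - \sum_(u | fle alpha y u && fle alpha u x)
          (#|finterval alpha y u|)%:Z * Tstat alpha u I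
      + \sum_(u | flt alpha x u && fle alpha u z)
          (#|finterval alpha u z|)%:Z * Tstat alpha u I.
Proof.
have Hbt : (0 < (nth 0 alpha i.-1).-1)%N by rewrite -subn1 subn_gt0.
have Hsij := is_sij_seg_chain Hpos H1 Htl Hi Hai x.
have [m Hm ->] := unshared_seg_chain Hpos H1 Htl Hi Hai x Hx.
have -> : y = seg_chain i x 1 by apply: Hsij Hy.
have -> : z = seg_chain i x (nth 0 alpha i.-1).-1 by apply: Hsij Hz; rewrite /beta Hbt leqnn.
rewrite -[in X in X%:Z](prednK (ltnW Hai)).
apply: (chain_identity (@covers_irr alpha) (u := seg_chain i x) Hbt _ _ _ _ _ _ HI Hm).
- exact: fle_seg_chain.
- exact: seg_chain_interval.
- exact: seg_chain_lower_cover.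
- exact: seg_chain_upper_cover.
- exact: valley_of_below.
- exact: peak_of_above.
Qed.
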